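(* Let $\mathcal{C}$ be a nonempty $3$-divisible set of points of $\mathrm{PG}(v-1,3)$ with $v\ge2$, and let $n=|\mathcal{C}|$. Then $n=4$ or $n\ge8$. Moreover, for $n=4$ and for every $n\ge8$ there exists a nonempty $3$-divisible set of $n$ points in $\mathrm{PG}(v-1,3)$ for some $v\ge2$.
   Context: $\mathrm{PG}(v-1,3)$ is the set of $1$-dimensional subspaces (points) of $\mathbb{F}_3^v$; hyperplanes are the $(v-1)$-dimensional subspaces. A set $\mathcal{C}$ of points is $\Delta$-divisible if there is an integer $u$ with $|\mathcal{C}\cap H|\equiv u\pmod{\Delta}$ for every hyperplane $H$, where $\mathcal{C}\cap H$ is the set of points of $\mathcal{C}$ contained in $H$. *)

From mathcomp Require Import all_boot all_algebra.
Set Implicit Arguments. Unset Strict Implicit. Unset Printing Implicit Defensive.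
Local Open Scope ring_scope.

(* Vectors of F_3^v are row vectors 'rV['F_3]_v.  A subspace is represented by
   its (finite) set of vectors; it is the row space of some matrix. *)
Definition vec3 (v : nat) := 'rV['F_3]_v.

Definition subspace_of_dim (v k : nat) (S : {set vec3 v}) : Prop :=
  exists A : 'M['F_3]_v, \rank A = k /\ S = [set x : vec3 v | (x <= A)%MS].

Definition is_point (v : nat) (P : {set vec3 v}) : Prop := subspace_of_dim 1 P.

Definition is_hyperplane (v : nat) (H : {set vec3 v}) : Prop :=
  subspace_of_dim v.-1 H.

Definition point_set (v : nat) (C : {set {set vec3 v}}) : Prop :=
  forall P, P \in C -> is_point P.

Definition meet_hyp (v : nat) (C : {set {set vec3 v}}) (H : {set vec3 v}) :=
  [set P in C | P \subset H].

Definition divisible (v Delta : nat) (C : {set {set vec3 v}}) : Prop :=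
  exists u : nat, forall H, is_hyperplane H -> #|meet_hyp C H| = u %[mod Delta].

(* For a set C of n points and a linear form a <> 0, let w(a) be the number of
   points of C off the hyperplane ker a.  Divisibility makes w(a) constant mod 3
   over a <> 0, and the first moment sum_a w(a) = 2n 3^(v-1) is divisible by 3,
   so every w(a) is a multiple of 3.  Together with the second moment
   sum_a w(a)^2 = (6n + 4n(n-1)) 3^(v-2), the inequality (w-3)(w-6) >= 0 rules
   out n = 6, 7, and for n <= 5 forces w(a) in {0, 3}, hence n = 4.
   Conversely, if nonzero pairwise independent x_1, ..., x_n in F_3^v satisfy
   sum_i x_i^T x_i = 0, then the number of i with x_i a <> 0 is congruent to
   a^T (sum_i x_i^T x_i) a = 0 mod 3, since nonzero squares of F_3 are 1; so the
   points spanned by the x_i form a 3-divisible set.  Such systems exist for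
   n = 4, 9, 10, 11 and are closed under direct sums, which gives all n >= 8. *)

From mathcomp Require Import all_boot all_algebra zify ring.
Set Implicit Arguments. Unset Strict Implicit. Unset Printing Implicit Defensive.
Import GRing.Theory.
Local Open Scope ring_scope.

Lemma card_set_sum (T : finType) (p : pred T) : #|[set x | p x]| = (\sum_x p x)%N.
Proof. by rewrite -sum1dep_card big_mkcond; apply: eq_bigr => x _; case: (p x). Qed.

Lemma card_set_sum_in (T : finType) (A : {pred T}) (p : pred T) :
  #|[set x in A | p x]| = (\sum_(x in A) p x)%N.
Proof. by rewrite card_set_sum [RHS]big_mkcond; apply: eq_bigr => x _; case: (x \in A). Qed.

Lemma card_set_uniq (T : finType) (t : seq T) (q : pred T) :
  uniq t -> #|[set x in t | q x]| = count q t.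
Proof.
move=> ut; rewrite -size_filter -(card_uniqP (filter_uniq q ut)).
by apply: eq_card => x; rewrite !inE mem_filter andbC.
Qed.

Lemma dvdn_const_mod_sum (T : finType) (t0 : T) (f : T -> nat) (p : nat) :
  (f t0 = 0 -> {in predC1 t0 &, forall s t, f s = f t %[mod p]} ->
   p %| #|T| -> p %| \sum_t f t -> forall t, p %| f t)%N.
Proof.
move=> f0 fc pT pS t; have [-> | tt0] := eqVneq t t0; first by rewrite f0 dvdn0.
have pT1 : (p %| #|T|.-1 * f t)%N.
  move: pS; rewrite /dvdn (bigD1 t0) //= f0 add0n -modn_summ.
  rewrite (eq_bigr (fun => f t %% p)%N) => [|s st0]; last by apply: fc; rewrite inE.
  rewrite sum_nat_cond_const (_ : [set s | s != t0] = [set~ t0]) ?cardsC1; last first.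
    by apply/setP=> s; rewrite !inE.
  by rewrite modnMmr.
have T0 : (0 < #|T|)%N by apply/card_gt0P; exists t.
by rewrite -[f t]mul1n -(subKn T0) subn1 mulnBl dvdn_sub // dvdn_mulr.
Qed.

Section LinearForms.
Variable F : finFieldType.

Lemma card_preim_mulmx m v (A : 'M[F]_(m, v)) (p : pred 'cV[F]_m) : row_free A ->
  #|[set a | p (A *m a)]| = (#|[set t | p t]| * #|[set a : 'cV_v | (A *m a == 0)%R]|)%N.
Proof.
case/row_freeP=> B AB; set K := [set a | A *m a == 0].
have AK k : k \in K -> A *m k = 0 by rewrite inE => /eqP.
have ABt t : A *m (B *m t) = t by rewrite mulmxA AB mul1mx.
rewrite -cardsX -(@card_in_imset _ _ (fun tk => B *m tk.1 + tk.2)); last first.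
  move=> [t k] [t' k'] /setXP[_ /AK Ak] /setXP[_ /AK Ak'] /= e.
  have et : t = t' by have := congr1 (mulmx A) e; rewrite !mulmxDr Ak Ak' !addr0 !ABt.
  by move: e; rewrite et => /addrI ->.
apply: eq_card => a; rewrite inE; apply/idP/imsetP => [pa | [[t k]]].
  exists (A *m a, a - B *m (A *m a)); last by rewrite /= addrC subrK.
  by rewrite !inE pa mulmxBr ABt subrr eqxx.
by case/setXP; rewrite inE => pt /AK Ak ->; rewrite mulmxDr Ak addr0 ABt.
Qed.

Lemma card_preim_mulmx_exp m v (A : 'M[F]_(m, v)) (p : pred 'cV[F]_m) : row_free A ->
  (#|[set a | p (A *m a)]| * #|F| ^ m = #|[set t | p t]| * #|F| ^ v)%N.
Proof.
move=> rfA; have tot := card_preim_mulmx (fun => true) rfA.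
have cT n : #|[set t : 'cV[F]_n | true]| = (#|F| ^ n)%N.
  by rewrite -[n in RHS]muln1 -card_mx; apply: eq_card => t; rewrite inE.
rewrite /= !cT in tot.
by rewrite card_preim_mulmx // mulnAC -mulnA -tot.
Qed.

Lemma card_cV1_neq0 : #|[set t : 'cV[F]_1 | t != 0]| = (#|F| - 1)%N.
Proof.
rewrite (_ : [set t | t != 0] = [set~ 0]) ?cardsC1 ?card_mx ?subn1 //.
by apply/setP=> t; rewrite !inE.
Qed.

Lemma card_nonorth v (x : 'rV[F]_v) : x != 0 ->
  (#|[set a : 'cV_v | (x *m a != 0)%R]| * #|F| = (#|F| - 1) * #|F| ^ v)%N.
Proof.
move=> x0; have := @card_preim_mulmx_exp _ _ x (fun t => t != 0).
by rewrite /row_free rank_rV x0 expn1 card_cV1_neq0 => ->.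
Qed.

Lemma row_free_col_mx_rV v (x y : 'rV[F]_v) : x != 0 -> ~~ (y <= x)%MS ->
  row_free (col_mx x y).
Proof.
move=> x0 yx; have : (x < col_mx x y)%MS.
  by rewrite ltmxE col_mx_sub submx_refl yx andbT -addsmxE addsmxSl.
rewrite ltmxErank rank_rV x0 => /andP[_ lt1].
by rewrite /row_free eqn_leq rank_leq_row.
Qed.

Lemma card_nonorth2 v (x y : 'rV[F]_v) : row_free (col_mx x y) ->
  (#|[set a : 'cV_v | (x *m a != 0)%R && (y *m a != 0)%R]| * #|F| ^ 2
    = (#|F| - 1) ^ 2 * #|F| ^ v)%N.
Proof.
pose p (t : 'cV[F]_(1 + 1)) := (usubmx t != 0) && (dsubmx t != 0).
move=> rf; have := card_preim_mulmx_exp p rf.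
rewrite (_ : [set a | _] = [set a : 'cV_v | (x *m a != 0) && (y *m a != 0)]); last first.
  by apply/setP=> a; rewrite !inE /p mul_col_mx col_mxKu col_mxKd.
move=> ->; congr (_ * _)%N.
rewrite -card_cV1_neq0 -mulnn -cardsX -(@card_imset _ _ (fun ud => col_mx ud.1 ud.2)).
  apply: eq_card => t; rewrite inE; apply/idP/imsetP => [/andP[u0 d0] | [[u d]]].
    by exists (usubmx t, dsubmx t); rewrite ?inE ?u0 ?d0 ?vsubmxK.
  by rewrite !inE /= => /andP[u0 d0] ->; rewrite /p col_mxKu col_mxKd u0 d0.
by move=> [u d] [u' d'] /eq_col_mx /= [-> ->].
Qed.

End LinearForms.

Section Moments.
Variables (F : finFieldType) (I : finType) (v : nat) (x : I -> 'rV[F]_v) (C : {set I}).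
Hypothesis x_neq0 : {in C, forall i, x i != 0}.
Hypothesis x_free : {in C &, forall i j, i != j -> row_free (col_mx (x i) (x j))}.

Definition weight (a : 'cV[F]_v) := #|[set i in C | x i *m a != 0]|.

Lemma sum_weight : ((\sum_a weight a) * #|F| = (#|F| - 1) * #|C| * #|F| ^ v)%N.
Proof.
under eq_bigr => a _ do rewrite /weight card_set_sum_in.
rewrite exchange_big big_distrl /=.
under eq_bigr => i Ci do rewrite -card_set_sum card_nonorth ?x_neq0 //.
by rewrite sum_nat_const mulnCA mulnA.
Qed.

Lemma sum_weight_sq : ((\sum_a weight a ^ 2) * #|F| ^ 2 =
  ((#|F| - 1) * #|F| * #|C| + (#|F| - 1) ^ 2 * #|C| * (#|C| - 1)) * #|F| ^ v)%N.
Proof.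
have sq a : (weight a ^ 2 = \sum_(i in C) \sum_(j in C)
    ((x i *m a != 0)%R && (x j *m a != 0)%R : nat))%N.
  rewrite /weight card_set_sum_in -mulnn big_distrlr /=.
  by apply: eq_bigr => i _; apply: eq_bigr => j _; rewrite mulnb.
under eq_bigr => a _ do rewrite sq.
rewrite exchange_big big_distrl /=.
have row_sum i : i \in C ->
  ((\sum_(a : 'cV_v) \sum_(j in C) ((x i *m a != 0)%R && (x j *m a != 0)%R : nat))
    * #|F| ^ 2 = ((#|F| - 1) * #|F| + (#|F| - 1) ^ 2 * (#|C| - 1)) * #|F| ^ v)%N.
  move=> Ci; rewrite exchange_big (bigD1 i Ci) /= !mulnDl; congr (_ + _)%N.
    under eq_bigr => a _ do rewrite andbb.
    have := card_nonorth (x_neq0 Ci); rewrite card_set_sum => cn.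
    by rewrite expnS expn1 mulnA cn mulnAC.
  rewrite big_distrl /=; under eq_bigr => j /andP[Cj ji].
    have ij : i != j by rewrite eq_sym.
    have := card_nonorth2 (x_free Ci Cj ij); rewrite card_set_sum => ->.
  over.
  rewrite sum_nat_const (cardsD1 i C) Ci add1n subSS subn0 /=.
  rewrite (eq_card (B := C :\ i)) => [|j]; last by rewrite !inE andbC.
  by rewrite mulnCA mulnA.
by rewrite (eq_bigr _ row_sum) sum_nat_const; ring.
Qed.

End Moments.

Lemma dvd3_moments_card (T : finType) (w : T -> nat) (n : nat) :
    (0 < #|T|)%N -> (0 < n)%N -> (forall a, 3 %| w a)%N -> (forall a, w a <= n)%N ->
    ((\sum_a w a) * 3 = 2 * n * #|T|)%N ->
    ((\sum_a w a ^ 2) * 9 = (6 * n + 4 * n * (n - 1)) * #|T|)%N ->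
  n = 4%N \/ (8 <= n)%N.
Proof.
move=> T0 n0 w3 wn S1 S2.
(* (w - 3) (w - 6) >= 0 on multiples of 3 *)
have quad a : (9 * w a <= w a ^ 2 + 18)%N.
  by case/dvdnP: (w3 a) => k ->; rewrite -mulnn; case: k => [|[|[|k]]] //; nia.
have sum_quad : (9 * \sum_a w a <= \sum_a w a ^ 2 + 18 * #|T|)%N.
  have -> : (18 * #|T| = \sum_(a : T) 18)%N by rewrite sum_nat_const mulnC.
  by rewrite big_distrr -big_split leq_sum // => a _; exact: quad.
have n67 : (54 * n <= 6 * n + 4 * n * (n - 1) + 162)%N.
  by rewrite -(leq_pmul2r T0); nia.
have [n5 | n5] := leqP n 5; last first.
  right; rewrite leqNgt; apply/negP => n8.
  by move: n67 n8; case: n n5 {n0 wn S1 S2} => [|[|[|[|[|[|[|[|n]]]]]]]].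
have sq a : (w a ^ 2 = 3 * w a)%N.
  by have := wn a; case/dvdnP: (w3 a) => k ->; case: k => [|[|k]] //; lia.
rewrite (eq_bigr _ (fun a _ => sq a)) -big_distrr /= in S2; left.
have : ((6 * n + 4 * n * (n - 1)) * #|T| = (18 * n) * #|T|)%N.
  by rewrite -S2 [(3 * _)%N]mulnC S1; ring.
move/eqP; rewrite eqn_pmul2r //; clear -n0 n5.
by case: n n0 n5 => [|[|[|[|[|[|n]]]]]].
Qed.

Section Geometry.
Variable v : nat.
Implicit Types (x y : vec3 v) (a : 'cV['F_3]_v) (P H : {set vec3 v}).

Definition line x : {set vec3 v} := [set z | (z <= x)%MS].
Definition point_vec P : vec3 v := odflt 0 [pick x in P | x != 0].
Definition hyp a : {set vec3 v} := [set z | z *m a == 0].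

Lemma line_point x : x != 0 -> is_point (line x).
Proof.
move=> x0; exists <<x>>%MS; split; first by rewrite genmxE rank_rV x0.
by apply/setP=> z; rewrite !inE genmxE.
Qed.

Lemma eq_line x y : x != 0 -> y != 0 -> (x <= y)%MS -> line x = line y.
Proof.
move=> x0 y0 xy; have /eqmxP exy : (x == y)%MS.
  by rewrite -(mxrank_leqif_eq xy).2 !rank_rV x0 y0.
by apply/setP=> z; rewrite !inE exy.
Qed.

Lemma point_vecP P : is_point P -> point_vec P != 0 /\ P = line (point_vec P).
Proof.
case=> A [rA ->]; have A0 : A != 0 by rewrite -mxrank_eq0 rA.
rewrite /point_vec; case: pickP => [x /andP[] | none]; last first.
  by have := none (nz_row A); rewrite inE nz_row_sub nz_row_eq0 A0.
rewrite inE => xA x0; split => //=; have /eqmxP exA : (x == A)%MS.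
  by rewrite -(mxrank_leqif_eq xA).2 rA rank_rV x0.
by apply/setP=> z; rewrite !inE exA.
Qed.

Lemma line_sub_hyp x a : (line x \subset hyp a) = (x *m a == 0).
Proof.
apply/subsetP/idP => [xa | /eqP xa z]; first by have := xa x; rewrite !inE submx_refl; apply.
by rewrite !inE => /(submxMr a); rewrite xa submx0.
Qed.

Lemma hyp_hyperplane a : a != 0 -> is_hyperplane (hyp a).
Proof.
move=> a0; exists (kermx a); split; last by apply/setP=> z; rewrite !inE sub_kermx.
by rewrite mxrank_ker -mxrank_tr rank_rV trmx_eq0 a0 subn1.
Qed.

Lemma hyperplaneP H : (0 < v)%N -> is_hyperplane H -> exists2 a, a != 0 & H = hyp a.
Proof.
move=> v0 [A [rA ->]]; set u := nz_row (kermx A^T).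
have u0 : u != 0 by rewrite nz_row_eq0 -mxrank_eq0 mxrank_ker mxrank_tr rA; lia.
have Au : A *m u^T = 0.
  by apply/eqP; rewrite -trmx_eq0 trmx_mul trmxK -sub_kermx nz_row_sub.
exists u^T; first by rewrite trmx_eq0.
have /eqmxP eA : (A == kermx u^T)%MS.
  rewrite -(mxrank_leqif_eq _).2 ?sub_kermx ?Au //.
  by rewrite mxrank_ker mxrank_tr rank_rV u0 rA subn1.
by apply/setP=> z; rewrite !inE eA sub_kermx.
Qed.

End Geometry.

Lemma card_F3 : #|'F_3| = 3%N. Proof. by rewrite card_Fp. Qed.

Lemma card_cV3 v : #|{: 'cV['F_3]_v}| = (3 ^ v)%N.
Proof. by rewrite card_mx card_F3 muln1. Qed.

Section DivisibleSets.
Variables (v : nat) (C : {set {set vec3 v}}).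
Hypothesis C_points : point_set C.

Let w := weight (@point_vec v) C.

Lemma point_vec_neq0 : {in C, forall P, point_vec P != 0}.
Proof. by move=> P /C_points/point_vecP[]. Qed.

Lemma point_vec_free :
  {in C &, forall P Q, P != Q -> row_free (col_mx (point_vec P) (point_vec Q))}.
Proof.
move=> P Q /C_points/point_vecP[P0 eP] /C_points/point_vecP[Q0 eQ] PQ.
apply: row_free_col_mx_rV => //; apply: contra PQ => QP.
by rewrite eP eQ (eq_line Q0 P0 QP).
Qed.

Lemma card_meet_hyp a : (#|meet_hyp C (hyp a)| + w a = #|C|)%N.
Proof.
have -> : meet_hyp C (hyp a) = [set P in C | point_vec P *m a == 0].
  apply/setP=> P; rewrite !inE; apply: andb_id2l => /C_points/point_vecP[_ {1}->].
  exact: line_sub_hyp.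
rewrite /w /weight !card_set_sum_in -big_split -sum1_card /=.
by apply: eq_bigr => P _; case: eqP.
Qed.

Lemma divisible3_dvdn_weight : (2 <= v)%N -> divisible 3 C -> forall a, (3 %| w a)%N.
Proof.
move=> v2 [u Cu]; apply: (@dvdn_const_mod_sum _ 0).
- apply/eqP; rewrite cards_eq0; apply/eqP/setP=> P.
  by rewrite !inE mulmx0 eqxx andbF.
- move=> a b a0 b0; apply/eqP; rewrite -(eqn_modDl #|meet_hyp C (hyp a)|).
  rewrite card_meet_hyp -modnDml (Cu _ (hyp_hyperplane a0)).
  by rewrite -(Cu _ (hyp_hyperplane b0)) modnDml card_meet_hyp.
- by rewrite card_cV3; exact: (dvdn_exp2l 3 (ltnW v2)).
have := sum_weight point_vec_neq0; rewrite card_F3 => sumw.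
rewrite -(dvdn_pmul2r (isT : 0 < 3)%N) sumw; apply: dvdn_mull.
exact: (dvdn_exp2l 3 v2).
Qed.

End DivisibleSets.

Lemma card_divisible3 v (C : {set {set vec3 v}}) : (2 <= v)%N -> point_set C ->
  C != set0 -> divisible 3 C -> #|C| = 4%N \/ (8 <= #|C|)%N.
Proof.
move=> v2 pC C0 dC; apply: (@dvd3_moments_card _ (weight (@point_vec v) C)).
- by rewrite card_cV3 expn_gt0.
- by rewrite card_gt0.
- exact: divisible3_dvdn_weight.
- by move=> a; apply/subset_leq_card/subsetP=> P; rewrite inE => /andP[].
- by have := sum_weight (point_vec_neq0 pC); rewrite card_F3 card_cV3.
- have := sum_weight_sq (point_vec_neq0 pC) (point_vec_free pC).
  by rewrite card_F3 card_cV3.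
Qed.

Section ProjectiveSystems.
Variable F : fieldType.

Definition gram v (s : seq 'rV[F]_v) : 'M[F]_v := \sum_(x <- s) x^T *m x.

Definition proj_system v (s : seq 'rV[F]_v) :=
  all (fun x => x != 0) s && pairwise (fun x y => ~~ (x <= y)%MS) s.

Lemma gram_cat v (s t : seq 'rV[F]_v) : gram (s ++ t) = gram s + gram t.
Proof. exact: big_cat. Qed.

Lemma gram_map_mulmx v w (M : 'M[F]_(v, w)) (s : seq 'rV[F]_v) :
  gram (map (mulmx^~ M) s) = M^T *m gram s *m M.
Proof.
rewrite /gram big_map mulmx_sumr mulmx_suml.
by apply: eq_bigr => x _; rewrite trmx_mul !mulmxA.
Qed.

Definition dsum v1 v2 (s1 : seq 'rV[F]_v1) (s2 : seq 'rV[F]_v2) : seq 'rV[F]_(v1 + v2) :=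
  map (mulmx^~ (row_mx 1%:M 0)) s1 ++ map (mulmx^~ (row_mx 0 1%:M)) s2.

Lemma gram_dsum v1 v2 (s1 : seq 'rV[F]_v1) (s2 : seq 'rV[F]_v2) :
  gram s1 = 0 -> gram s2 = 0 -> gram (dsum s1 s2) = 0.
Proof. by move=> g1 g2; rewrite gram_cat !gram_map_mulmx g1 g2 !(mulmx0, mul0mx) addr0. Qed.

Lemma proj_system_dsum v1 v2 (s1 : seq 'rV[F]_v1) (s2 : seq 'rV[F]_v2) :
  proj_system s1 -> proj_system s2 -> proj_system (dsum s1 s2).
Proof.
rewrite /dsum; set L : 'M[F]_(v1, v1 + v2) := row_mx 1%:M 0.
set R : 'M[F]_(v2, v1 + v2) := row_mx 0 1%:M.
have LK : L *m col_mx 1%:M 0 = 1%:M by rewrite mul_row_col mulmx1 mulmx0 addr0.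
have RL0 : R *m col_mx 1%:M 0 = 0 by rewrite mul_row_col mulmx1 mulmx0 addr0.
have Lfree : row_free L by apply/row_freeP; exists (col_mx 1%:M 0).
have Rfree : row_free R.
  by apply/row_freeP; exists (col_mx 0 1%:M); rewrite mul_row_col mulmx1 mulmx0 add0r.
case/andP=> nz1 pw1 /andP[nz2 pw2].
rewrite /proj_system all_cat !all_map pairwise_cat !pairwise_map; apply/and3P; split.
- by apply/andP; split; [apply: sub_all nz1 | apply: sub_all nz2] => x;
    rewrite /= mulmx_free_eq0.
- apply/allrelP => _ _ /mapP[x x1 ->] /mapP[y _ ->].
  apply: contraL (allP nz1 x x1) => /(submxMr (col_mx 1%:M 0)).
  by rewrite -!mulmxA LK RL0 mulmx1 mulmx0 => /submx0null ->; rewrite eqxx.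
- by apply/andP; split; [apply: sub_pairwise pw1 | apply: sub_pairwise pw2] => x y;
    rewrite /= submxMfree.
Qed.

End ProjectiveSystems.

Lemma F3_sqr (c : 'F_3) : c * c = (c != 0)%:R.
Proof. by case: c => [[|[|[|]]] ?] //; apply/val_inj. Qed.

Lemma F3_natr_eq0 n : ((n%:R : 'F_3) == 0) = (3 %| n)%N.
Proof. by rewrite (dvdn_pcharf (pchar_Fp (isT : prime 3))). Qed.

Lemma F3_natr_eq (m n : nat) : ((m%:R : 'F_3) == n%:R) = (m %% 3 == n %% 3)%N.
Proof. by rewrite -val_eqE /= !(val_Fp_nat (isT : prime 3)). Qed.

Lemma mx11_eq0 (R : nzRingType) (A : 'M[R]_1) : (A == 0) = (A 0 0 == 0).
Proof.
apply/eqP/eqP => [-> | A0]; first by rewrite mxE.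
by apply/matrixP=> i j; rewrite !ord1 A0 mxE.
Qed.

Lemma count_gram v (s : seq 'rV['F_3]_v) (a : 'cV['F_3]_v) :
  (count (fun x => x *m a != 0) s)%:R = (a^T *m gram s *m a) 0 0.
Proof.
elim: s => [|x s IH]; first by rewrite /gram big_nil mulmx0 mul0mx mxE.
rewrite /= natrD IH /gram big_cons mulmxDr mulmxDl [RHS]mxE; congr (_ + _).
have -> : a^T *m (x^T *m x) *m a = (x *m a)^T *m (x *m a) by rewrite trmx_mul !mulmxA.
by rewrite mx11_eq0 -F3_sqr [RHS]mxE big_ord1 !mxE.
Qed.

Section Lines.
Variable v : nat.
Implicit Types (s : seq (vec3 v)).

Definition lines s : {set {set vec3 v}} := [set P in map (@line v) s].

Lemma uniq_lines s : pairwise (fun x y => ~~ (x <= y)%MS) s -> uniq (map (@line v) s).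
Proof.
rewrite uniq_pairwise pairwise_map => /sub_pairwise; apply=> x y /=.
apply: contra => /eqP exy; have : x \in line x by rewrite inE submx_refl.
by rewrite exy inE.
Qed.

Lemma lines_points s : all (fun x => x != 0) s -> point_set (lines s).
Proof. by move=> nz P; rewrite inE => /mapP[x /(allP nz) x0 ->]; exact: line_point. Qed.

Lemma card_lines s : proj_system s -> #|lines s| = size s.
Proof. by case/andP=> _ /uniq_lines us; rewrite cardsE (card_uniqP us) size_map. Qed.

Lemma divisible_lines s : (0 < v)%N -> proj_system s -> gram s = 0 ->
  divisible 3 (lines s).
Proof.
move=> v0 /andP[_ /uniq_lines us] g0; exists (size s) => _ /(hyperplaneP v0)[a _ ->].
have -> : meet_hyp (lines s) (hyp a) = [set P in map (@line v) s | P \subset hyp a].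
  by apply/setP=> P; rewrite !inE.
rewrite card_set_uniq // count_map (eq_count (a2 := fun x => x *m a == 0)); last first.
  by move=> x; rewrite /= line_sub_hyp.
have /dvdnP[k ek] : (3 %| count (fun x => (x *m a != 0)%R) s)%N.
  by rewrite -F3_natr_eq0 count_gram g0 mulmx0 mul0mx mxE.
move: (count_predC (fun x => x *m a == 0) s).
rewrite (eq_count (a1 := predC _) (a2 := fun x => x *m a != 0)) // ek => <-.
by rewrite addnC modnMDl.
Qed.

End Lines.

Definition realizable n := exists v (s : seq 'rV['F_3]_v),
  [/\ (2 <= v)%N, proj_system s, gram s = 0 & size s = n].

Lemma realizable_add m n : realizable m -> realizable n -> realizable (m + n).
Proof.
move=> [v1 [s1 [v1_2 ps1 g1 <-]]] [v2 [s2 [_ ps2 g2 <-]]].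
exists (v1 + v2)%N, (dsum s1 s2); split.
- exact: leq_trans v1_2 (leq_addr _ _).
- exact: proj_system_dsum.
- exact: gram_dsum.
- by rewrite size_cat !size_map.
Qed.

Lemma realizable_divisible n : (0 < n)%N -> realizable n ->
  exists v (C : {set {set vec3 v}}),
    [/\ (2 <= v)%N, point_set C, C != set0, divisible 3 C & #|C| = n].
Proof.
move=> n0 [v [s [v2 ps g0 sn]]]; exists v, (lines s).
have cs : #|lines s| = n by rewrite card_lines // sn.
split=> //; first by apply: lines_points; case/andP: ps.
  by rewrite -card_gt0 cs.
exact: divisible_lines (leq_trans _ v2) ps g0.
Qed.

(* Matrices over 'F_3 do not compute, so the examples below are certified by
   boolean tests on lists of naturals, read mod 3 as coordinate vectors. *)
Definition vec_of v (l : seq nat) : 'rV['F_3]_v := \row_(j < v) (nth 0 l j)%:R.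

Definition nz_mod3 v (l : seq nat) := has (fun j => nth 0 l j %% 3 != 0)%N (iota 0 v).

Definition nonprop_mod3 v (l l' : seq nat) :=
  all (fun c => has (fun j => nth 0 l j %% 3 != c * nth 0 l' j %% 3)%N (iota 0 v))
    (iota 0 3).

Definition gram_mod3_eq0 v (L : seq (seq nat)) :=
  all (fun i => all (fun j => sumn [seq nth 0 l i * nth 0 l j | l <- L] %% 3 == 0)%N
    (iota 0 v)) (iota 0 v).

Definition proj_table v L :=
  [&& all (nz_mod3 v) L, pairwise (nonprop_mod3 v) L & gram_mod3_eq0 v L].

Lemma vec_of_neq0 v l : nz_mod3 v l -> vec_of v l != 0.
Proof.
case/hasP=> j; rewrite mem_iota add0n => /andP[_ jv]; apply: contraNneq => e.
have := congr1 (fun y : 'rV['F_3]_v => y 0 (Ordinal jv)) e.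
by rewrite !mxE => /eqP; rewrite F3_natr_eq0.
Qed.

Lemma vec_of_nonprop v l l' : nonprop_mod3 v l l' -> ~~ (vec_of v l <= vec_of v l')%MS.
Proof.
move=> h; apply/negP => /sub_rVP[c e].
have c3 : (c : nat) \in iota 0 3 by rewrite mem_iota add0n ltn_ord.
have /hasP[j] := allP h _ c3; rewrite mem_iota add0n => /andP[_ jv].
apply/negP; rewrite negbK; have := congr1 (fun y : 'rV['F_3]_v => y 0 (Ordinal jv)) e.
by rewrite !mxE -[c in c * _]natr_Zp -natrM => /eqP; rewrite F3_natr_eq.
Qed.

Lemma gram_vec_of v L (i j : 'I_v) :
  gram (map (vec_of v) L) i j = (sumn [seq nth 0 l i * nth 0 l j | l <- L])%:R.
Proof.
elim: L => [|l L IH]; first by rewrite /gram big_nil mxE.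
rewrite /gram big_cons mxE -/(gram _) IH natrD; congr (_ + _).
by rewrite mxE big_ord1 !mxE natrM.
Qed.

Lemma realizable_table v L : (2 <= v)%N -> proj_table v L -> realizable (size L).
Proof.
move=> v2 /and3P[nz np g0]; exists v, (map (vec_of v) L); split; rewrite ?size_map //.
  apply/andP; split; first by rewrite all_map; apply: sub_all nz => l; exact: vec_of_neq0.
  by rewrite pairwise_map; apply: sub_pairwise np => l l'; exact: vec_of_nonprop.
apply/matrixP=> i j; rewrite gram_vec_of mxE; apply/eqP; rewrite F3_natr_eq0.
move/allP: g0 => /(_ i); rewrite mem_iota ltn_ord => /(_ isT)/allP/(_ j).
by rewrite mem_iota ltn_ord => /(_ isT).
Qed.

Lemma realizable4 : realizable 4.
Proof. by apply: (@realizable_table 2 [:: [:: 1; 0]; [:: 0; 1]; [:: 1; 1]; [:: 1; 2]]). Qed.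

Lemma realizable9 : realizable 9.
Proof.
by apply: (@realizable_table 3 [:: [:: 1; 0; 0]; [:: 1; 0; 1]; [:: 1; 0; 2];
  [:: 1; 1; 0]; [:: 1; 1; 1]; [:: 1; 1; 2]; [:: 1; 2; 0]; [:: 1; 2; 1]; [:: 1; 2; 2]]).
Qed.

Lemma realizable10 : realizable 10.
Proof.
by apply: (@realizable_table 4 [:: [:: 0; 1; 0; 1]; [:: 0; 0; 1; 1]; [:: 1; 2; 2; 2];
  [:: 0; 1; 2; 1]; [:: 0; 1; 2; 2]; [:: 1; 2; 2; 1]; [:: 1; 2; 1; 2]; [:: 1; 1; 2; 2];
  [:: 1; 1; 1; 2]; [:: 1; 1; 1; 0]]).
Qed.

Lemma realizable11 : realizable 11.
Proof.
by apply: (@realizable_table 5 [:: [:: 1; 0; 0; 1; 1]; [:: 0; 0; 0; 1; 1];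
  [:: 1; 1; 1; 2; 2]; [:: 0; 1; 1; 0; 1]; [:: 1; 1; 1; 1; 0]; [:: 1; 1; 2; 1; 0];
  [:: 1; 0; 1; 0; 0]; [:: 1; 2; 1; 1; 0]; [:: 1; 1; 2; 0; 0]; [:: 1; 0; 2; 0; 1];
  [:: 1; 0; 2; 0; 2]]).
Qed.

Lemma realizable_4_or_ge8 n : n = 4%N \/ (8 <= n)%N -> realizable n.
Proof.
elim/ltn_ind: n => n IH [-> | n8]; first exact: realizable4.
have [n12 | n12] := ltnP n 12.
  have : (n = 8 \/ n = 9 \/ n = 10 \/ n = 11)%N by lia.
  case=> [|[|[|]]] ->.
  - exact: (realizable_add realizable4 realizable4).
  - exact: realizable9.
  - exact: realizable10.
  - exact: realizable11.
have -> : n = (n - 4 + 4)%N by lia.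
by apply: realizable_add realizable4; apply: IH; lia.
Qed.

Theorem lemma6p7 :
  (forall (v : nat) (C : {set {set vec3 v}}),
      (2 <= v)%N -> point_set C -> C != set0 -> divisible 3 C ->
      #|C| = 4 \/ (8 <= #|C|)%N)
  /\
  (forall n : nat, n = 4 \/ (8 <= n)%N ->
      exists (v : nat) (C : {set {set vec3 v}}),
        [/\ (2 <= v)%N, point_set C, C != set0, divisible 3 C & #|C| = n]).
Proof.
split=> [v C | n n48]; first exact: card_divisible3.
by apply: realizable_divisible (realizable_4_or_ge8 n48); case: n48 => [-> | /(leq_trans _)->].
Qed.
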